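(* Let $A\in\mathbb{C}^{n\times n}$ be Hermitian and let $Q\in\mathbb{C}^{n\times k}$, $2\le k\le n$, have orthonormal columns. Let $Q^*AQ=\Omega\widehat\Lambda\Omega^*$ be an eigendecomposition with $\Omega$ unitary and $\widehat\Lambda=\mathrm{diag}(\widehat\lambda_1,\ldots,\widehat\lambda_k)$, and let $\widehat X=[\widehat x_1,\ldots,\widehat x_k]=Q\Omega$ (Ritz values $\widehat\lambda_i$, Ritz vectors $\widehat x_i$). Let $Q_\perp\in\mathbb{C}^{n\times(n-k)}$ be such that $[Q\ Q_\perp]$ is unitary, so that $$[Q\Omega,\,Q_\perp]^*A[Q\Omega,\,Q_\perp]=\begin{bmatrix}\widehat\Lambda & R^*\\ R & A_3\end{bmatrix},\qquad R=Q_\perp^*AQ\Omega=[r_1,\ldots,r_k],\quad A_3=Q_\perp^*AQ_\perp .$$ Consider the Ritz pair $(\widehat\lambda,\widehat x)=(\widehat\lambda_1,\widehat x_1)$, let $\widehat\Lambda_2=\mathrm{diag}(\widehat\lambda_2,\ldots,\widehat\lambda_k)$ and $R_2=[r_2,\ldots,r_k]$. Let $(\lambda,x)$ be an eigenpair of $A$ with $\|x\|=1$, and define $\mathrm{Gap}=\min|\lambda-\lambda(A_3)|$ and $\mathrm{gap}=\min|\lambda-\lambda(\widehat\Lambda_2)|$. Then $$\sin\angle(x,\widehat x)\le\frac{\|R\|}{\mathrm{Gap}}\sqrt{1+\frac{\|R_2\|^2}{\mathrm{gap}^2}}\ \le\ \frac{\|R\|}{\mathrm{Gap}}\Big(1+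\frac{\|R_2\|}{\mathrm{gap}}\Big).$$
   Context: $\|\cdot\|$ is the Euclidean norm for vectors and the spectral norm for matrices. $\lambda(M)$ denotes the set of eigenvalues of a Hermitian matrix $M$, and $\min|\lambda-\lambda(M)|$ is the distance from $\lambda$ to that set. For unit vectors, $\angle(x,\widehat x)=\arccos|\widehat x^*x|$. Note $\|r_i\|=\|A\widehat x_i-\widehat\lambda_i\widehat x_i\|$. A bound with a vanishing denominator is interpreted as $+\infty$. *)

From HB Require Import structures.
From mathcomp Require Import all_boot all_order all_algebra.
From mathcomp Require Import complex.
From mathcomp Require Import all_classical all_reals all_analysis.
Set Implicit Arguments. Unset Strict Implicit. Unset Printing Implicit Defensive.
Import Order.TTheory GRing.Theory Num.Theory.
Local Open Scope ring_scope.
Local Open Scope classical_set_scope.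

Section Defs.
Variable R : realType.
Local Notation C := (R[i]).

Definition cabs (z : C) : R := Normc.normc z.

Definition mxadj (p q : nat) (M : 'M[C]_(p, q)) : 'M[C]_(q, p) :=
  map_mx (@conjc R) M^T.

Definition vnorm (p : nat) (v : 'cV[C]_p) : R :=
  Num.sqrt (\sum_(i < p) cabs (v i 0) ^+ 2).

Definition specnorm (p q : nat) (M : 'M[C]_(p, q)) : R :=
  sup [set vnorm (M *m v) | v in [set v : 'cV[C]_q | vnorm v = 1]].

(* min |lam - lambda(M)| : distance from lam to the set of eigenvalues of M,
   as an extended real (= +oo when M has no eigenvalue, i.e. M is 0 x 0) *)
Definition specdist (p : nat) (M : 'M[C]_p) (lam : C) : \bar R :=
  ereal_inf [set (cabs (lam - mu))%:E | mu in [set mu | eigenvalue M mu]].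

Definition vangle (p : nat) (x xh : 'cV[C]_p) : R :=
  acos (cabs ((mxadj xh *m x) 0 0)).

End Defs.

From HB Require Import structures.
From mathcomp Require Import all_boot all_order all_algebra.
From mathcomp Require Import complex.
From mathcomp Require Import all_classical all_reals all_analysis.
From mathcomp Require Import spectral sesquilinear.
Import Order.TTheory GRing.Theory Num.Theory.
Local Open Scope ring_scope.

(* Expand x = X a + Q_perp b in the orthonormal basis [X Q_perp], X = Q Omega, and
   split a = (a_1, a_2) along the first Ritz vector, so that
   sin(angle(x, xh))^2 = 1 - |a_1|^2 = |a_2|^2 + |b|^2.  The lower block rows of
   A x = lam x read (lam - A_3) b = R a and (lam - Lam_2) a_2 = R_2^* b, whence
   Gap |b| <= |R| and gap |a_2| <= |R_2| |b|; therefore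
   |a_2|^2 + |b|^2 <= |b|^2 (1 + |R_2|^2 / gap^2)
                   <= |R|^2 / Gap^2 (1 + |R_2|^2 / gap^2). *)

Set Implicit Arguments. Unset Strict Implicit. Unset Printing Implicit Defensive.

Section Eigenvalues.
Variable F : fieldType.

Lemma eigenvalue_diag_mx n (e : 'rV[F]_n) i : eigenvalue (diag_mx e) (e 0 i).
Proof.
apply/eigenvalueP; exists (delta_mx 0 i); first by rewrite -rowE row_diag_mx.
by apply/negP => /eqP/matrixP/(_ 0 i)/eqP; rewrite !mxE !eqxx oner_eq0.
Qed.

Lemma eigenvalue_similar n (P D : 'M[F]_n) mu :
  P \in unitmx -> eigenvalue D mu -> eigenvalue (invmx P *m D *m P) mu.
Proof.
move=> P_unit /eigenvalueP[v vD v_neq0]; apply/eigenvalueP; exists (v *m P).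
  by rewrite !mulmxA mulmxK // vD scalemxAl.
by apply: contraNneq v_neq0 => vP0; rewrite -(mulmxK P_unit v) vP0 mul0mx.
Qed.

End Eigenvalues.

Section Norms.
Variable R : realType.
Local Notation C := R[i].
Local Open Scope complex_scope.

Lemma cabsC (z : C) : (cabs z)%:C = `|z|.
Proof. by rewrite normc_def /cabs; case: z. Qed.

Lemma cabs_ge0 (z : C) : 0 <= cabs z.
Proof. by case: z => a b; rewrite /cabs sqrtr_ge0. Qed.

Lemma cabsM (y z : C) : cabs (y * z) = cabs y * cabs z.
Proof. exact: Normc.normcM. Qed.

Lemma cabsR (r : R) : cabs r%:C = `|r|.
Proof. by rewrite /cabs /= expr0n /= addr0 sqrtr_sqr. Qed.

Lemma sqr_cabs (z : C) : (cabs z ^+ 2)%:C = z^* * z.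
Proof.
case: z => a b; rewrite /cabs /= sqr_sqrtr ?addr_ge0 ?sqr_ge0 //.
by apply/eqP; rewrite eq_complex /= !expr2 !mulNr opprK [b * a]mulrC subrr !eqxx.
Qed.

Lemma cabs_sum I (r : seq I) (P : pred I) (F : I -> C) :
  cabs (\sum_(i <- r | P i) F i) <= \sum_(i <- r | P i) cabs (F i).
Proof.
rewrite -lecR cabsC rmorph_sum (eq_bigr _ (fun i _ => cabsC (F i))).
exact: ler_norm_sum.
Qed.

Lemma mxadjM p q r (A : 'M[C]_(p, q)) (B : 'M[C]_(q, r)) :
  mxadj (A *m B) = mxadj B *m mxadj A.
Proof. by rewrite /mxadj trmx_mul map_mxM. Qed.

Lemma mxadjK p q (A : 'M[C]_(p, q)) : mxadj (mxadj A) = A.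
Proof. by apply/matrixP => i j; rewrite !mxE conjcK. Qed.

Definition sqnorm p (v : 'cV[C]_p) : R := \sum_i cabs (v i 0) ^+ 2.

Lemma vnormE p (v : 'cV[C]_p) : vnorm v = Num.sqrt (sqnorm v).
Proof. by []. Qed.

Lemma sqnorm_ge0 p (v : 'cV[C]_p) : 0 <= sqnorm v.
Proof. by apply: sumr_ge0 => i _; rewrite sqr_ge0. Qed.

Lemma vnorm_ge0 p (v : 'cV[C]_p) : 0 <= vnorm v.
Proof. exact: sqrtr_ge0. Qed.

Lemma sqr_vnorm p (v : 'cV[C]_p) : vnorm v ^+ 2 = sqnorm v.
Proof. exact/sqr_sqrtr/sqnorm_ge0. Qed.

Lemma sqnormC p (v : 'cV[C]_p) : (sqnorm v)%:C = (mxadj v *m v) 0 0.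
Proof.
rewrite /sqnorm rmorph_sum mxE; apply: eq_bigr => i _.
by rewrite !mxE; apply: sqr_cabs.
Qed.

Lemma sqnorm_isometry p q (U : 'M[C]_(q, p)) (v : 'cV[C]_p) :
  mxadj U *m U = 1%:M -> sqnorm (U *m v) = sqnorm v.
Proof.
move=> hU; apply: complexI; rewrite !sqnormC mxadjM.
by rewrite -mulmxA (mulmxA (mxadj U)) hU mul1mx.
Qed.

Lemma vnorm_isometry p q (U : 'M[C]_(q, p)) (v : 'cV[C]_p) :
  mxadj U *m U = 1%:M -> vnorm (U *m v) = vnorm v.
Proof. by move=> hU; rewrite !vnormE sqnorm_isometry. Qed.

Lemma sqnorm_col_mx p q (u : 'cV[C]_p) (v : 'cV[C]_q) :
  sqnorm (col_mx u v) = sqnorm u + sqnorm v.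
Proof.
rewrite /sqnorm big_split_ord; congr (_ + _); apply: eq_bigr => i _.
  by rewrite col_mxEu.
by rewrite col_mxEd.
Qed.

Lemma sqnorm_usub_dsub p q (v : 'cV[C]_(p + q)) :
  sqnorm v = sqnorm (usubmx v) + sqnorm (dsubmx v).
Proof. by rewrite -sqnorm_col_mx vsubmxK. Qed.

Lemma sqnorm1 (v : 'cV[C]_1) : sqnorm v = cabs (v 0 0) ^+ 2.
Proof. by rewrite /sqnorm big_ord1. Qed.

Lemma vnormZ p (c : C) (v : 'cV[C]_p) : vnorm (c *: v) = cabs c * vnorm v.
Proof.
rewrite !vnormE -[cabs c]ger0_norm ?cabs_ge0 // -sqrtr_sqr -sqrtrM ?sqr_ge0 //.
congr Num.sqrt; rewrite /sqnorm mulr_sumr; apply: eq_bigr => i _.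
by rewrite mxE cabsM exprMn.
Qed.

Lemma cabs_le_vnorm p (v : 'cV[C]_p) i : cabs (v i 0) <= vnorm v.
Proof.
rewrite -(ler_pXn2r (ltn0Sn 1)) ?nnegrE ?cabs_ge0 ?vnorm_ge0 // sqr_vnorm.
by rewrite /sqnorm (bigD1 i) //= lerDl sumr_ge0 // => j _; rewrite sqr_ge0.
Qed.

Lemma vnorm0 p : vnorm (0 : 'cV[C]_p) = 0.
Proof.
by rewrite vnormE /sqnorm big1 ?sqrtr0 // => i _; rewrite mxE /cabs Normc.normc0 expr0n.
Qed.

Lemma vnorm_dim0 p (v : 'cV[C]_p) : p = 0%N -> vnorm v = 0.
Proof. by move=> p0; subst p; rewrite vnormE /sqnorm big_ord0 sqrtr0. Qed.

Lemma vnorm_eq0 p (v : 'cV[C]_p) : vnorm v = 0 -> v = 0.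
Proof.
move=> v0; apply/matrixP => i j; rewrite ord1 mxE; apply: Normc.eq0_normc.
by apply/eqP; rewrite eq_le cabs_ge0 andbT -v0 cabs_le_vnorm.
Qed.

Lemma cabs_adj_mulmx_le p (u w : 'cV[C]_p) :
  cabs ((mxadj u *m w) 0 0) <= vnorm u * vnorm w.
Proof.
have dotE (y z : 'cV[C]_p) : dotmx z^T y^T = (mxadj y *m z) 0 0.
  by rewrite dotmxE !mxE; apply: eq_bigr => i _; rewrite !mxE mulrC.
have CS : `|(mxadj u *m w) 0 0| ^+ 2 <= (sqnorm w)%:C * (sqnorm u)%:C.
  by rewrite -dotE !sqnormC -!dotE; case: (CauchySchwarz (@dotmx C p) w^T u^T).
rewrite -cabsC -rmorphXn -rmorphM lecR -!sqr_vnorm in CS.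
by rewrite -(ler_pXn2r (ltn0Sn 1)) ?nnegrE ?cabs_ge0 ?mulr_ge0 ?vnorm_ge0 // exprMn mulrC.
Qed.

Lemma vnorm_mulmx_unit_le p q (M : 'M[C]_(p, q)) (v : 'cV[C]_q) :
  vnorm v = 1 -> vnorm (M *m v) <= specnorm M.
Proof.
move=> v1; apply: sup_upper_bound; last by exists v.
split; first by exists (vnorm (M *m v)), v.
exists (Num.sqrt (\sum_i (\sum_j cabs (M i j)) ^+ 2)) => _ [w w1 <-].
rewrite vnormE ler_sqrt ?sumr_ge0 // => [|i _]; last by rewrite sqr_ge0.
have Mi_ge0 i : 0 <= \sum_j cabs (M i j) by apply: sumr_ge0 => j _; exact: cabs_ge0.
apply: ler_sum => i _; apply: lerXn2r; rewrite ?nnegrE ?cabs_ge0 ?Mi_ge0 //.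
rewrite mxE (le_trans (cabs_sum _ _ _)) // ler_sum // => j _.
by rewrite cabsM ler_piMr ?cabs_ge0 // -w1 cabs_le_vnorm.
Qed.

Lemma specnorm_ge0 p q (M : 'M[C]_(p, q)) : 0 <= specnorm M.
Proof.
have [[v v1]|no_unit] := pselect (exists v : 'cV[C]_q, vnorm v = 1).
  exact: le_trans (vnorm_ge0 _) (vnorm_mulmx_unit_le M v1).
(* Without unit vectors (q = 0) the defining set is empty and [sup set0 = 0]. *)
rewrite /specnorm (_ : [set _ | _ in _] = set0)%classic ?sup0 //.
by apply/seteqP; split=> // y [v v1 _]; apply: no_unit; exists v.
Qed.

Lemma vnorm_mulmx_le p q (M : 'M[C]_(p, q)) (v : 'cV[C]_q) :
  vnorm (M *m v) <= specnorm M * vnorm v.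
Proof.
have [v0|v_neq0] := eqVneq (vnorm v) 0.
  by rewrite (vnorm_eq0 v0) mulmx0 !vnorm0 mulr0.
have v_gt0 : 0 < vnorm v by rewrite lt_def v_neq0 vnorm_ge0.
have inv_ge0 : 0 <= (vnorm v)^-1 by rewrite invr_ge0 ltW.
have u1 : vnorm ((vnorm v)^-1%:C *: v) = 1 by rewrite vnormZ cabsR ger0_norm // mulVf.
have := vnorm_mulmx_unit_le M u1.
by rewrite -scalemxAr vnormZ cabsR ger0_norm // ler_pdivrMl // mulrC.
Qed.

Lemma vnorm_adj_mulmx_le p q (M : 'M[C]_(p, q)) (v : 'cV[C]_p) :
  vnorm (mxadj M *m v) <= specnorm M * vnorm v.
Proof.
set w := mxadj M *m v.
have [w0|w_neq0] := eqVneq (vnorm w) 0.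
  by rewrite w0 mulr_ge0 ?specnorm_ge0 ?vnorm_ge0.
have w_gt0 : 0 < vnorm w by rewrite lt_def w_neq0 vnorm_ge0.
have sqw : vnorm w ^+ 2 = cabs ((mxadj v *m (M *m w)) 0 0).
  rewrite sqr_vnorm -[sqnorm w]ger0_norm ?sqnorm_ge0 // -cabsR sqnormC.
  by rewrite mxadjM mxadjK mulmxA.
have CS := cabs_adj_mulmx_le v (M *m w).
have := le_trans CS (ler_wpM2l (vnorm_ge0 v) (vnorm_mulmx_le M w)).
by rewrite -sqw expr2 mulrA ler_pM2r // mulrC.
Qed.

End Norms.

Section SpectralBounds.
Variable R : realType.
Local Notation C := R[i].
Local Open Scope sesquilinear_scope.

Lemma specdist_lbound p (M : 'M[C]_p) lam g mu :
  specdist M lam = g%:E -> eigenvalue M mu -> g <= cabs (lam - mu).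
Proof. by move=> Mg M_mu; rewrite -lee_fin -Mg; apply: ereal_inf_lbound; exists mu. Qed.

Lemma specdist_pinfty p (M : 'M[C]_p) lam : specdist M lam = +oo%E -> p = 0%N.
Proof.
move=> Moo; have [//|p_gt0] := posnP p.
have [mu M_mu] := eigenvalue_closed M p_gt0.
suff : (specdist M lam <= (cabs (lam - mu))%:E)%E by rewrite Moo.
by apply: ereal_inf_lbound; exists mu.
Qed.

Lemma vnorm_diag_sub_ge n (e : 'rV[C]_n) lam g (v : 'cV[C]_n) :
  0 <= g -> (forall i, g <= cabs (lam - e 0 i)) ->
  g * vnorm v <= vnorm ((lam%:M - diag_mx e) *m v).
Proof.
move=> g_ge0 e_far.
rewrite -(ler_pXn2r (ltn0Sn 1)) ?nnegrE ?mulr_ge0 ?vnorm_ge0 // exprMn !sqr_vnorm.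
rewrite /sqnorm mulr_sumr; apply: ler_sum => i _.
rewrite mulmxBl mul_scalar_mx mul_diag_mx !mxE -mulrBl cabsM exprMn.
by rewrite ler_wpM2r ?sqr_ge0 //; apply: lerXn2r; rewrite ?nnegrE ?cabs_ge0.
Qed.

Lemma vnorm_herm_sub_ge n (H : 'M[C]_n) lam g (v : 'cV[C]_n) :
  mxadj H = H -> 0 <= g -> (forall mu, eigenvalue H mu -> g <= cabs (lam - mu)) ->
  g * vnorm v <= vnorm ((lam%:M - H) *m v).
Proof.
move=> H_herm g_ge0 H_far.
have /orthomx_spectralP H_eq : H \is normalmx.
  by apply/normalmxP; rewrite -[H ^t* ]/(mxadj H) H_herm.
set P := spectralmx H in H_eq; set D := spectral_diag H in H_eq.
have P_unit : P \in unitmx := spectral_unit H.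
have PPt : P *m mxadj P = 1%:M by apply/unitarymxP/spectral_unitarymx.
have PtP : mxadj P *m P = 1%:M := mulmx1C PPt.
have -> : lam%:M - H = mxadj P *m (lam%:M - diag_mx D) *m P.
  rewrite -[mxadj P]invmx_unitary ?spectral_unitarymx // mulmxBr mulmxBl -H_eq.
  by rewrite mul_mx_scalar -scalemxAl mulVmx // scalemx1.
rewrite -!mulmxA vnorm_isometry ?mxadjK // -(vnorm_isometry v PtP).
apply: vnorm_diag_sub_ge => // i; apply: H_far; rewrite H_eq.
exact: eigenvalue_similar (eigenvalue_diag_mx D i).
Qed.

End SpectralBounds.

Lemma hypot_le (R : rcfType) (al be g G s r : R) :
  0 <= al -> 0 <= be -> 0 < g -> 0 < G -> g * al <= s * be -> G * be <= r ->
  Num.sqrt (al ^+ 2 + be ^+ 2) <= r * G^-1 * Num.sqrt (1 + s ^+ 2 / g ^+ 2).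
Proof.
move=> al_ge0 be_ge0 g_gt0 G_gt0 al_le be_le.
have al_le' : al <= s / g * be by rewrite mulrAC ler_pdivlMr // mulrC.
have be_le' : be <= r * G^-1 by rewrite ler_pdivlMr // mulrC.
rewrite -expr_div_n; apply: le_trans (_ : be * Num.sqrt (1 + (s / g) ^+ 2) <= _).
  rewrite -[be in X in _ <= X]ger0_norm // -sqrtr_sqr -sqrtrM ?sqr_ge0 //.
  rewrite ler_sqrt ?mulr_ge0 ?sqr_ge0 ?addr_ge0 ?sqr_ge0 //.
  rewrite mulrDr mulr1 addrC lerD2l -exprMn mulrC.
  by apply: lerXn2r; rewrite ?nnegrE ?(le_trans al_ge0 al_le').
by rewrite ler_wpM2r ?sqrtr_ge0.
Qed.

Lemma sqrt_1_sqr_le (R : rcfType) (t : R) : 0 <= t -> Num.sqrt (1 + t ^+ 2) <= 1 + t.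
Proof.
move=> t_ge0; rewrite -[X in _ <= X]ger0_norm ?addr_ge0 // -sqrtr_sqr.
by rewrite ler_sqrt ?sqr_ge0 // sqrrD expr1n mul1r lerD2r lerDl mulrn_wge0.
Qed.

Section RitzPair.
Variables (R : realType) (k m : nat).
Local Notation C := R[i].
Variables (A : 'M[C]_(k.+1 + m)) (Q : 'M[C]_(k.+1 + m, k.+1)).
Variables (Qp : 'M[C]_(k.+1 + m, m)) (Om : 'M[C]_k.+1) (d : 'rV[C]_k.+1).
Variables (lam : C) (x : 'cV[C]_(k.+1 + m)).
Hypothesis A_herm : mxadj A = A.
Hypothesis Om_unitary : mxadj Om *m Om = 1%:M.
Hypothesis QAQ_diag : mxadj Q *m A *m Q = Om *m diag_mx d *m mxadj Om.
Hypothesis QQp_unitary : mxadj (row_mx Q Qp) *m row_mx Q Qp = 1%:M.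
Hypothesis x_eigen : A *m x = lam *: x.

Local Notation X := (Q *m Om).
Local Notation Rm := (mxadj Qp *m A *m Q *m Om).
Local Notation R2 := (rsubmx (Rm : 'M[C]_(m, (1 + k)%N))).
Local Notation A3 := (mxadj Qp *m A *m Qp).
Local Notation d2 := (rsubmx (d : 'rV[C]_((1 + k)%N))).
Local Notation a := (mxadj X *m x).
Local Notation a2 := (dsubmx (a : 'cV[C]_((1 + k)%N))).
Local Notation b := (mxadj Qp *m x).

Lemma ritz_basis_unitary : mxadj (row_mx X Qp) *m row_mx X Qp = 1%:M.
Proof.
have -> : row_mx X Qp = row_mx Q Qp *m block_mx Om 0 0 1%:M.
  by rewrite mul_row_block !mulmx0 addr0 add0r mulmx1.
rewrite mxadjM -mulmxA (mulmxA (mxadj (row_mx Q Qp))) QQp_unitary mul1mx.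
have -> : mxadj (block_mx Om 0 0 (1%:M : 'M[C]_m)) = block_mx (mxadj Om) 0 0 1%:M.
  by rewrite /mxadj tr_block_mx map_block_mx !trmx0 trmx1 !map_mx0 map_mx1.
by rewrite mulmx_block !mulmx0 !mul0mx !addr0 !add0r Om_unitary mulmx1 scalar_mx_block.
Qed.

Lemma ritz_coordsE : col_mx a b = mxadj (row_mx X Qp) *m x.
Proof. by rewrite /mxadj tr_row_mx map_col_mx mul_col_mx. Qed.

Lemma ritz_coords_decomp : x = X *m a + Qp *m b.
Proof.
rewrite -mul_row_col ritz_coordsE mulmxA mulmx1C ?mul1mx //.
exact: ritz_basis_unitary.
Qed.

Lemma ritz_coords_sqnorm : sqnorm a + sqnorm b = sqnorm x.
Proof.
rewrite -sqnorm_col_mx ritz_coordsE sqnorm_isometry // mxadjK.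
exact/mulmx1C/ritz_basis_unitary.
Qed.

Lemma perp_coords_eq : (lam%:M - A3) *m b = Rm *m a.
Proof.
have eq_b : mxadj Qp *m A *m x = lam *: b by rewrite -mulmxA x_eigen -scalemxAr.
rewrite {1}ritz_coords_decomp mulmxDr !(mulmxA (mxadj Qp *m A)) in eq_b.
by rewrite mulmxBl mul_scalar_mx -eq_b addrK.
Qed.

Lemma ritz_coords_eq : (lam%:M - diag_mx d2) *m a2 = mxadj R2 *m b.
Proof.
have XAX : mxadj X *m A *m X = diag_mx d.
  rewrite !mxadjM -!mulmxA (mulmxA (mxadj Q)) (mulmxA (mxadj Q *m A)) QAQ_diag.
  by rewrite !mulmxA Om_unitary mul1mx -mulmxA Om_unitary mulmx1.
have XAQp : mxadj X *m A *m Qp = mxadj Rm by rewrite !mxadjM mxadjK A_herm !mulmxA.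
have : mxadj X *m A *m x = lam *: a by rewrite -mulmxA x_eigen -scalemxAr.
rewrite {1}ritz_coords_decomp mulmxDr (mulmxA _ X) (mulmxA _ Qp) XAX XAQp.
move=> /matrixP eq_a.
apply/matrixP => i j; rewrite mulmxBl mul_scalar_mx mul_diag_mx.
have := eq_a (rshift 1 i) j; rewrite mul_diag_mx !mxE => <-.
by rewrite addrAC subrr add0r; apply: eq_bigr => l _; rewrite !mxE.
Qed.

Lemma ritz_coords_vnorm_le : vnorm a <= vnorm x.
Proof.
by rewrite !vnormE ler_sqrt ?sqnorm_ge0 // -ritz_coords_sqnorm lerDl sqnorm_ge0.
Qed.

Lemma sin_vangle_ritz : vnorm x = 1 ->
  sin (vangle x (col 0 X)) = Num.sqrt (sqnorm a2 + sqnorm b).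
Proof.
move=> x_unit.
have a0E : (mxadj (col 0 X) *m x) 0 0 = a 0 0.
  by rewrite !mxE; apply: eq_bigr => j _; rewrite !mxE.
have a0_le1 : cabs (a 0 0) <= 1.
  by rewrite -x_unit (le_trans (cabs_le_vnorm _ _)) ?ritz_coords_vnorm_le.
rewrite /vangle a0E sin_acos; last by rewrite a0_le1 (le_trans (lerN10 _)) ?cabs_ge0.
have := ritz_coords_sqnorm; rewrite -[sqnorm x]sqr_vnorm x_unit expr1n.
rewrite (sqnorm_usub_dsub (a : 'cV[C]_(1 + k))) sqnorm1 -addrA => <-.
have -> : usubmx (a : 'cV[C]_(1 + k)) 0 0 = a 0 0.
  by rewrite mxE; congr (a _ 0); exact: val_inj.
by rewrite addrC addrK.
Qed.

Lemma ritz_coords_bound g : 0 <= g -> (forall i, g <= cabs (lam - d2 0 i)) ->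
  g * vnorm a2 <= specnorm R2 * vnorm b.
Proof.
move=> g_ge0 d2_far; apply: le_trans (vnorm_diag_sub_ge a2 g_ge0 d2_far) _.
by rewrite ritz_coords_eq vnorm_adj_mulmx_le.
Qed.

Lemma perp_coords_bound g :
  0 <= g -> (forall mu, eigenvalue A3 mu -> g <= cabs (lam - mu)) -> vnorm x = 1 ->
  g * vnorm b <= specnorm Rm.
Proof.
move=> g_ge0 A3_far x_unit.
have A3_herm : mxadj A3 = A3 by rewrite !mxadjM mxadjK A_herm mulmxA.
apply: le_trans (vnorm_herm_sub_ge b A3_herm g_ge0 A3_far) _.
rewrite perp_coords_eq (le_trans (vnorm_mulmx_le _ _)) // ler_piMr ?specnorm_ge0 //.
by rewrite -x_unit ritz_coords_vnorm_le.
Qed.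

Lemma sin_vangle_ritz_le g G : 0 < g -> 0 < G ->
  (forall i, g <= cabs (lam - d2 0 i)) ->
  (forall mu, eigenvalue A3 mu -> G <= cabs (lam - mu)) -> vnorm x = 1 ->
  sin (vangle x (col 0 X))
    <= specnorm Rm * G^-1 * Num.sqrt (1 + specnorm R2 ^+ 2 / g ^+ 2).
Proof.
move=> g_gt0 G_gt0 d2_far A3_far x_unit.
rewrite sin_vangle_ritz // -!sqr_vnorm; apply: hypot_le; rewrite ?vnorm_ge0 //.
  exact: ritz_coords_bound (ltW g_gt0) d2_far.
exact: perp_coords_bound (ltW G_gt0) A3_far x_unit.
Qed.

Lemma sin_vangle_ritz_dim0 g : m = 0%N -> 0 < g ->
  (forall i, g <= cabs (lam - d2 0 i)) -> vnorm x = 1 -> sin (vangle x (col 0 X)) = 0.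
Proof.
move=> m0 g_gt0 d2_far x_unit; have b0 : vnorm b = 0 by exact: vnorm_dim0.
have a20 : vnorm a2 = 0.
  apply/eqP; rewrite eq_le vnorm_ge0 andbT -(pmulr_rle0 _ g_gt0).
  by rewrite (le_trans (ritz_coords_bound (ltW g_gt0) d2_far)) // b0 mulr0.
by rewrite sin_vangle_ritz // -!sqr_vnorm a20 b0 expr0n addr0 sqrtr0.
Qed.

End RitzPair.

Theorem theorem3p1 (R : realType) (k m : nat) (hk : (1 <= k)%N)
  (A : 'M[R[i]]_(k.+1 + m)) (Q : 'M[R[i]]_(k.+1 + m, k.+1))
  (Qp : 'M[R[i]]_(k.+1 + m, m)) (Om : 'M[R[i]]_k.+1) (d : 'rV[R[i]]_k.+1)
  (lam : R[i]) (x : 'cV[R[i]]_(k.+1 + m)) :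
  mxadj A = A ->
  mxadj Q *m Q = 1%:M ->
  mxadj Om *m Om = 1%:M ->
  mxadj Q *m A *m Q = Om *m diag_mx d *m mxadj Om ->
  mxadj (row_mx Q Qp) *m row_mx Q Qp = 1%:M ->
  A *m x = lam *: x -> vnorm x = 1 ->
  let xh := col 0 (Q *m Om) in
  let Rm := mxadj Qp *m A *m Q *m Om in
  let R2 := rsubmx (Rm : 'M[R[i]]_(m, (1 + k)%N)) in
  let A3 := mxadj Qp *m A *m Qp in
  let Lam2 := diag_mx (rsubmx (d : 'rV[R[i]]_((1 + k)%N))) in
  let Gap := specdist A3 lam in
  let gap := fine (specdist Lam2 lam) in
  (0%:E < Gap)%E -> 0 < gap ->
  ((sin (vangle x xh))%:E
     <= (specnorm Rm)%:E * Gap^-1 * (Num.sqrt (1 + specnorm R2 ^+ 2 / gap ^+ 2))%:E)%E /\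
  ((specnorm Rm)%:E * Gap^-1 * (Num.sqrt (1 + specnorm R2 ^+ 2 / gap ^+ 2))%:E
     <= (specnorm Rm)%:E * Gap^-1 * (1 + specnorm R2 / gap)%:E)%E.
Proof.
move=> A_herm _ Om_unitary QAQ_diag QQp_unitary x_eigen x_unit.
move=> xh Rm R2 A3 Lam2 Gap gap Gap_gt0 gap_gt0.
(* [fine] sends +oo to 0, so [0 < gap] makes [specdist Lam2 lam] finite. *)
have gapE : specdist Lam2 lam = gap%:E.
  by move: gap_gt0; rewrite /gap; case: (specdist Lam2 lam) => //=; rewrite ltxx.
have d2_far i : gap <= cabs (lam - rsubmx (d : 'rV_(1 + k)) 0 i).
  exact: specdist_lbound gapE (eigenvalue_diag_mx _ i).
split.
  case GapE : Gap Gap_gt0 => [G| |] // G_gt0.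
    rewrite lte_fin in G_gt0; rewrite inver gt_eqF // -!EFinM lee_fin.
    apply: (sin_vangle_ritz_le A_herm Om_unitary QAQ_diag QQp_unitary x_eigen) => // mu.
    exact: specdist_lbound GapE.
  (* Gap = +oo forces m = 0, and then x is parallel to the first Ritz vector. *)
  have sin0 := sin_vangle_ritz_dim0 A_herm Om_unitary QAQ_diag QQp_unitary x_eigen
    (specdist_pinfty GapE) gap_gt0 d2_far x_unit.
  by rewrite /xh sin0 invey mule0 mul0e.
apply: lee_wpmul2l; first by rewrite mule_ge0 ?inve_ge0 ?lee_fin ?specnorm_ge0 ?ltW.
by rewrite lee_fin -expr_div_n sqrt_1_sqr_le ?divr_ge0 ?specnorm_ge0 ?ltW.
Qed.
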